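(* Assume the standing conventions of the context and suppose $\mathcal D_{Z,Z'}\neq\emptyset$. Let $\Psi'$ be a consecutive pair in $Z'_{\mathrm I}$ such that $(Z,\Lambda_{\Psi'})\in\mathcal D_{Z,Z'}$, and let $N\subset Z'_{\mathrm I}$ with $|N\cap\Psi'|=1$. Then there is no $\Lambda\in\overline{\mathcal S}_Z$ with $(\Lambda,\Lambda_N)\in\overline{\mathcal B}^+_{Z,Z'}$.
   Context: A symbol is an array $\Lambda=\binom{a'_1,\ldots,a'_{m_1}}{b'_1,\ldots,b'_{m_2}}$ of two strictly decreasing finite sequences of nonnegative integers (top row, bottom row); its defect is $\mathrm{def}(\Lambda)=m_1-m_2$. Standing assumptions: $Z=\binom{a_1,\ldots,a_{m+1}}{b_1,\ldots,b_m}$ is a special symbol of defect $1$, i.e. $a_1\ge b_1\ge a_2\ge b_2\ge\cdots\ge b_m\ge a_{m+1}$; $Z'=\binom{c_1,\ldots,c_{m'}}{d_1,\ldots,d_{m'}}$ is a special symbol of defect $0$, i.e. $c_1\ge d_1\ge c_2\ge d_2\ge\cdots\ge c_{m'}\ge d_{m'}$; and $m'\in\{m,m+1\}$. For a symbol $Y$, $Y_{\mathrm I}$ is the set of entries of $Y$ occurring in exactly one row. For $M\subset Z_{\mathrm I}$, $\Lambda_M$ is the symbol obtained from $Z$ by moving every entry of $M$ to the other row (rows re-sorted decreasingly); for $N\subset Z'_{\mathrm I}$, $\Lambda_N$ is obtained from $Z'$ in the same way. $\overline{\mathcal S}_Z=\{\Lambda_M: M\subset Z_{\mathrm I}\}$,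 $\overline{\mathcal S}_{Z'}=\{\Lambda_N:N\subset Z'_{\mathrm I}\}$; $\mathcal S_{Z,1}$ (resp. $\mathcal S_{Z',0}$) is the set of elements of $\overline{\mathcal S}_Z$ of defect $1$ (resp. of $\overline{\mathcal S}_{Z'}$ of defect $0$). A consecutive pair in $Z'_{\mathrm I}$ is a two-element subset $\{c_k,d_l\}\subset Z'_{\mathrm I}$, written $\binom{c_k}{d_l}$, with $l\in\{k-1,k\}$; a consecutive pair in $Z_{\mathrm I}$ is $\{a_k,b_l\}\subset Z_{\mathrm I}$, written $\binom{a_k}{b_l}$, with $l\in\{k-1,k\}$. Relation $\overline{\mathcal B}^+_{Z,Z'}\subset\overline{\mathcal S}_Z\times\overline{\mathcal S}_{Z'}$: for $\Lambda=\binom{a'_1,\ldots,a'_{m_1}}{b'_1,\ldots,b'_{m_2}}\in\overline{\mathcal S}_Z$ and $\Lambda'=\binom{c'_1,\ldots,c'_{m'_1}}{d'_1,\ldots,d'_{m'_2}}\in\overline{\mathcal S}_{Z'}$, $(\Lambda,\Lambda')\in\overline{\mathcal B}^+_{Z,Z'}$ iff $\mathrm{def}(\Lambda')=1-\mathrm{def}(\Lambda)$ and: if $m'=m$, $a'_i>d'_i\ge a'_{i+1}$ for $1\le i\le m'_2$ and $b'_{i-1}>c'_i\ge b'_i$ for $1\le i\le m'_1$; if $m'=m+1$, $a'_i\ge d'_i>a'_{i+1}$ for $1\le i\le m'_2$ and $b'_{i-1}\ge c'_i>b'_i$ for $1\le i\le m'_1$; here $b'_0=+\infty$ and nonexistent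 entries $a'_j,b'_j$ beyond the row lengths are $-\infty$. Then $\mathcal D_{Z,Z'}=\overline{\mathcal B}^+_{Z,Z'}\cap(\mathcal S_{Z,1}\times\mathcal S_{Z',0})$. *)

From mathcomp Require Import all_boot all_order all_algebra.
Set Implicit Arguments. Unset Strict Implicit. Unset Printing Implicit Defensive.
Import GRing.Theory Num.Theory.

(* A symbol: (top row, bottom row); rows are lists of naturals, listed
   in decreasing order.  Indices are 0-based in Rocq (entry i here is
   entry i+1 in the paper). *)
Definition symbol := (seq nat * seq nat)%type.

Definition sdec (s : seq nat) : bool := sorted (fun x y => y < x) s.
Definition is_symbol (Y : symbol) : bool := sdec Y.1 && sdec Y.2.

Definition defect (Y : symbol) : int := ((size Y.1)%:Z - (size Y.2)%:Z)%R.

(* Z = (a_1..a_{m+1} ; b_1..b_m) special of defect 1 *)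
Definition special1 (Z : symbol) : Prop :=
  is_symbol Z /\ size Z.1 = (size Z.2).+1 /\
  forall i, i < size Z.2 ->
    nth 0 Z.2 i <= nth 0 Z.1 i /\ nth 0 Z.1 i.+1 <= nth 0 Z.2 i.

(* Z' = (c_1..c_m' ; d_1..d_m') special of defect 0 *)
Definition special0 (Z' : symbol) : Prop :=
  is_symbol Z' /\ size Z'.1 = size Z'.2 /\
  forall i, i < size Z'.2 ->
    nth 0 Z'.2 i <= nth 0 Z'.1 i /\
    (i.+1 < size Z'.1 -> nth 0 Z'.1 i.+1 <= nth 0 Z'.2 i).

Definition symI (Y : symbol) (x : nat) : bool := (x \in Y.1) (+) (x \in Y.2).

Definition move (Y : symbol) (M : seq nat) : symbol :=
  (sort (fun x y => y <= x)
     ([seq x <- Y.1 | x \notin M] ++ [seq x <- Y.2 | x \in M]),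
   sort (fun x y => y <= x)
     ([seq x <- Y.2 | x \notin M] ++ [seq x <- Y.1 | x \in M])).

Definition in_Sbar (Y L : symbol) : Prop :=
  exists M : seq nat, (forall x, x \in M -> symI Y x) /\ L = move Y M.

(* entries with nonexistent ones = -infinity (encoded as None) *)
Definition ent (s : seq nat) (i : nat) : option nat :=
  if i < size s then Some (nth 0 s i) else None.

Definition gtE (x y : option nat) : bool :=
  match x, y with
  | Some a, Some b => b < a
  | Some _, None => true
  | None, _ => false
  end.
Definition geE (x y : option nat) : bool :=
  match x, y with
  | Some a, Some b => b <= a
  | _, None => true
  | None, Some _ => false
  end.

Definition condA (L L' : symbol) : Prop :=
  (forall i, i < size L'.2 ->
     gtE (ent L.1 i) (ent L'.2 i) /\ geE (ent L'.2 i) (ent L.1 i.+1)) /\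
  (forall i, i < size L'.1 ->
     (i = 0 \/ gtE (ent L.2 i.-1) (ent L'.1 i)) /\ geE (ent L'.1 i) (ent L.2 i)).

Definition condB (L L' : symbol) : Prop :=
  (forall i, i < size L'.2 ->
     geE (ent L.1 i) (ent L'.2 i) /\ gtE (ent L'.2 i) (ent L.1 i.+1)) /\
  (forall i, i < size L'.1 ->
     (i = 0 \/ geE (ent L.2 i.-1) (ent L'.1 i)) /\ gtE (ent L'.1 i) (ent L.2 i)).

(* (L, L') in \overline{B}^+_{Z,Z'};  m = size Z.2, m' = size Z'.1 *)
Definition Bplus (Z Z' L L' : symbol) : Prop :=
  defect L' = (1 - defect L)%R /\
  (size Z'.1 = size Z.2 -> condA L L') /\
  (size Z'.1 = (size Z.2).+1 -> condB L L').

Definition inD (Z Z' L L' : symbol) : Prop :=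
  Bplus Z Z' L L' /\
  (in_Sbar Z L /\ defect L = 1%R) /\ (in_Sbar Z' L' /\ defect L' = 0%R).

(* consecutive pair (c_k ; d_l) in Z'_I, l in {k-1, k} (0-based indices) *)
Definition consec_pair (Z' : symbol) (k l : nat) : Prop :=
  k < size Z'.1 /\ l < size Z'.2 /\ (l = k \/ l.+1 = k) /\
  symI Z' (nth 0 Z'.1 k) /\ symI Z' (nth 0 Z'.2 l).

Definition pairseq (Z' : symbol) (k l : nat) : seq nat :=
  [:: nth 0 Z'.1 k; nth 0 Z'.2 l].

From mathcomp Require Import all_boot all_order all_algebra.
From mathcomp Require Import zify.

(* Fix a threshold y and count the entries of a symbol that are >= y (when
   m' = m+1) or > y (when m' = m); call this the mass of the symbol at y.
   Moving entries between the rows preserves the mass, so every member of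
   S-bar_Z has the mass of Z.  The interlacing inequalities of B-bar^+
   say that, for an entry y of a row of Lambda', the number of entries of the
   opposite row of Lambda above y equals the rank (position) of y in its row.
   Hence
   (a) if u > v lie in the same row of Lambda' and (Lambda, Lambda') is in
       B-bar^+, the mass of Lambda at u is smaller than at v;
   (b) for the pair (Z, Lambda_Psi'), the ranks of c_k and d_l in Z' (special
       of defect 0) and the bounds count(Z.2) <= count(Z.1) <= count(Z.2)+1
       (Z special of defect 1) force the masses of Z at u = max Psi' and at
       v = min Psi' to be equal.
   Since |N /\ Psi'| = 1, the two entries of Psi' lie in the same row of
   Lambda_N, and (a) for (Lambda, Lambda_N) contradicts (b). *)

Set Implicit Arguments. Unset Strict Implicit. Unset Printing Implicit Defensive.

Local Notation nonincr s := (sorted (fun x y : nat => y <= x) s).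

(* Predicates closed upwards: their satisfying entries form a prefix of a
   nonincreasing list. *)
Definition upward (p : pred nat) : Prop := forall y z, p y -> y <= z -> p z.

(* The threshold predicate "z >= y" (weak) or "z > y" (strict); the weak form
   matches the case m' = m+1 of B-bar^+, the strict one the case m' = m. *)
Definition above (weak : bool) (y : nat) : pred nat :=
  fun z => if weak then y <= z else y < z.

Definition rank (s : seq nat) (y : nat) : nat := count (fun z => y < z) s.

Lemma above_upward weak y : upward (above weak y).
Proof. by move=> a c; rewrite /above; case: weak; apply: leq_trans. Qed.

Lemma geq_rel_trans : transitive (fun x y : nat => y <= x).
Proof. by move=> a b c h1 h2; apply: leq_trans h2 h1. Qed.

Lemma upward_prefix (p : pred nat) s i : nonincr s -> upward p ->
  i < size s -> p (nth 0 s i) = (i < count p s).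
Proof.
move=> ss up; elim: s ss i => [|x s IH] //= ss i hi.
case px: (p x) => /=.
  by case: i hi => [|i] //= hi; rewrite IH ?(path_sorted ss).
have below_x z : z \in x :: s -> z <= x.
  by rewrite inE => /orP[/eqP->//|zs]; apply: (allP (order_path_min geq_rel_trans ss)).
have notp z : z \in x :: s -> p z = false.
  by move=> /below_x zx; apply/negP => /up /(_ zx); rewrite px.
have -> : count p s = 0.
  by apply/eqP; rewrite -leqn0 leqNgt -has_count; apply/hasPn => z zs; rewrite notp // inE zs orbT.
by rewrite ltn0 notp // mem_nth.
Qed.

Lemma upward_count_eq (p : pred nat) s j : nonincr s -> upward p ->
  (0 < j -> (j.-1 < size s) && p (nth 0 s j.-1)) ->
  ((j < size s) ==> ~~ p (nth 0 s j)) -> count p s = j.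
Proof.
move=> ss up before /implyP after; apply/eqP; rewrite eqn_leq; apply/andP; split.
- rewrite leqNgt; apply/negP => lt_j.
  have js : j < size s by have := count_size p s; lia.
  by move: (after js); rewrite (upward_prefix ss up js) lt_j.
- case: j before {after} => [|j] // /(_ isT) /andP [js].
  by rewrite (upward_prefix ss up js).
Qed.

Lemma nth_rank s y : nonincr s -> y \in s ->
  rank s y < size s /\ nth 0 s (rank s y) = y.
Proof.
move=> ss ys; have up := @above_upward false y.
have iy : index y s < size s by rewrite index_mem.
have ri : rank s y <= index y s.
  by rewrite leqNgt -(upward_prefix ss up iy) /above nth_index // ltnn.
have rs : rank s y < size s by apply: leq_ltn_trans iy.
split=> //; apply/eqP; rewrite eqn_leq.
have := upward_prefix ss up rs; rewrite ltnn /above => /negbT; rewrite -leqNgt => ->.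
by rewrite -{1}(nth_index 0 ys) (sorted_leq_nth geq_rel_trans leqnn 0 ss).
Qed.

Lemma rank_strict s u v : v < u -> u \in s -> rank s u < rank s v.
Proof.
move=> vu; elim: s => //= x s IH; rewrite inE /rank /= => /orP [/eqP <-|us].
- by rewrite ltnn vu add1n ltnS; apply: sub_count => z /=; apply: ltn_trans.
- have := IH us; rewrite /rank; case: (ltnP u x); case: (ltnP v x) => /=; lia.
Qed.

Lemma above_antitone weak s u v : v <= u ->
  count (above weak u) s <= count (above weak v) s.
Proof. by move=> vu; apply: sub_count => z; rewrite /above; case: weak => /=; lia. Qed.

Definition mass (p : pred nat) (Y : symbol) : nat := count p Y.1 + count p Y.2.

Lemma move_nonincr1 Y M : nonincr (move Y M).1.
Proof. by apply: sort_sorted => x y; apply: leq_total. Qed.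

Lemma move_nonincr2 Y M : nonincr (move Y M).2.
Proof. by apply: sort_sorted => x y; apply: leq_total. Qed.

Lemma count_filter_split (p : pred nat) (M s : seq nat) :
  count p [seq x <- s | x \notin M] + count p [seq x <- s | x \in M] = count p s.
Proof. by elim: s => //= x s IH; case: (x \in M) => /=; lia. Qed.

Lemma mass_move p Y M : mass p (move Y M) = mass p Y.
Proof.
rewrite /mass /move /= !count_sort !count_cat.
rewrite -(count_filter_split p M Y.1) -(count_filter_split p M Y.2).
by rewrite addnACA [in RHS]addnACA [X in _ = _ + X]addnC.
Qed.

Lemma count_move1 p Y M :
  count p (move Y M).1 + count (fun z => p z && (z \in M)) Y.1 =
  count p Y.1 + count (fun z => p z && (z \in M)) Y.2.
Proof.
rewrite /move /= count_sort count_cat -(count_filter_split p M Y.1) !count_filter.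
by rewrite -!addnA; congr (_ + _); rewrite addnC.
Qed.

Lemma count_move2 p Y M :
  count p (move Y M).2 + count (fun z => p z && (z \in M)) Y.2 =
  count p Y.2 + count (fun z => p z && (z \in M)) Y.1.
Proof.
rewrite /move /= count_sort count_cat -(count_filter_split p M Y.2) !count_filter.
by rewrite -!addnA; congr (_ + _); rewrite addnC.
Qed.

Lemma count_single_mem (p : pred nat) (s M : seq nat) c : uniq s -> c \in s -> c \in M ->
  {in s, forall z, z \in M -> z = c} -> count (fun z => p z && (z \in M)) s = p c.
Proof.
move=> us cs cM onlyc.
rewrite (@eq_in_count _ _ (fun z => p c && (z == c))); last first.
  move=> z zs /=; case: (eqVneq z c) => [->|zc]; first by rewrite cM.
  by rewrite !andbF; apply/negbTE/negP => /andP[_ /(onlyc z zs) /eqP]; rewrite (negbTE zc).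
case: (p c) => /=; last by rewrite count_pred0.
by rewrite (count_uniq_mem c us) cs.
Qed.

Lemma count_move_pair p Y c d : uniq Y.1 -> uniq Y.2 ->
  c \in Y.1 -> c \notin Y.2 -> d \in Y.2 -> d \notin Y.1 ->
  count p (move Y [:: c; d]).1 + p c = count p Y.1 + p d /\
  count p (move Y [:: c; d]).2 + p d = count p Y.2 + p c.
Proof.
move=> u1 u2 c1 c2 d2 d1.
have only1 : {in Y.1, forall z, z \in [:: c; d] -> z = c}.
  by move=> z zs; rewrite !inE => /orP [/eqP //|/eqP e]; rewrite -e zs in d1.
have only2 : {in Y.2, forall z, z \in [:: c; d] -> z = d}.
  by move=> z zs; rewrite !inE => /orP [/eqP e|/eqP //]; rewrite -e zs in c2.
have Mc : c \in [:: c; d] by rewrite inE eqxx.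
have Md : d \in [:: c; d] by rewrite !inE eqxx orbT.
rewrite -(count_single_mem p u1 c1 Mc only1) -(count_single_mem p u2 d2 Md only2).
by split; [apply: count_move1 | apply: count_move2].
Qed.

Lemma move_pair_swaps Y c d : c \in Y.1 -> d \in Y.2 ->
  c \in (move Y [:: c; d]).2 /\ d \in (move Y [:: c; d]).1.
Proof. by move=> c1 d2; rewrite /move /= !mem_sort !mem_cat !mem_filter !inE !eqxx c1 d2 !orbT. Qed.

Definition same_row (Y : symbol) (x y : nat) : bool :=
  ((x \in Y.1) && (y \in Y.1)) || ((x \in Y.2) && (y \in Y.2)).

Lemma same_row_sym Y x y : same_row Y x y = same_row Y y x.
Proof. by rewrite /same_row andbC [(x \in Y.2) && _]andbC. Qed.

Lemma move_one_same_row Y N c d :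
  c \in Y.1 -> c \notin Y.2 -> d \in Y.2 -> d \notin Y.1 ->
  count (fun x => x \in N) [:: c; d] = 1 -> same_row (move Y N) c d.
Proof.
move=> c1 c2 d2 d1; rewrite /same_row /move /= !mem_sort !mem_cat !mem_filter.
by rewrite c1 (negbTE c2) (negbTE d1) d2; case: (c \in N); case: (d \in N).
Qed.

Lemma sdec_nonincr s : sdec s -> nonincr s.
Proof. by apply: sub_sorted => x y; apply: ltnW. Qed.

Lemma sdec_uniq s : sdec s -> uniq s.
Proof. by apply: sorted_uniq => [x y z /= h1 h2|x]; [apply: ltn_trans h1 | rewrite /= ltnn]. Qed.

(* For Z special of defect 1 (a_1 >= b_1 >= a_2 >= ... >= a_{m+1}), the
   first row has as many entries above any threshold as the second, or one
   more. *)
Lemma special1_bounds Z p : special1 Z -> upward p ->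
  count p Z.2 <= count p Z.1 <= (count p Z.2).+1.
Proof.
move=> [/andP [/sdec_nonincr sa /sdec_nonincr sb] [hsz interl]] up.
apply/andP; split; rewrite leqNgt; apply/negP => lt_cnt.
- set j := count p Z.1 in lt_cnt.
  have j2 : j < size Z.2 by have := count_size p Z.2; lia.
  have pb : p (nth 0 Z.2 j) by rewrite (upward_prefix sb up j2).
  have j1 : j < size Z.1 by lia.
  by have := upward_prefix sa up j1; rewrite ltnn (up _ _ pb (interl j j2).1).
- set j := count p Z.2 in lt_cnt.
  have j1 : j.+1 < size Z.1 by have := count_size p Z.1; lia.
  have j2 : j < size Z.2 by lia.
  have pa : p (nth 0 Z.1 j.+1) by rewrite (upward_prefix sa up j1).
  by have := upward_prefix sb up j2; rewrite ltnn (up _ _ pa (interl j j2).2).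
Qed.

Lemma special0_rank_top Z' k : special0 Z' -> k < size Z'.1 ->
  nth 0 Z'.1 k \notin Z'.2 -> rank Z'.2 (nth 0 Z'.1 k) = k.
Proof.
move=> [/andP [_ /sdec_nonincr sd] [hsz interl]] hk cd.
apply: upward_count_eq => //; first exact: (@above_upward false).
- case: k hk cd => [|k] // hk cd _; have k2 : k < size Z'.2 by lia.
  rewrite k2 /= ltn_neqAle (interl k k2).2 // andbT.
  by apply: (contraNneq _ cd) => ->; apply: mem_nth.
- by apply/implyP => k2; rewrite -leqNgt (interl k k2).1.
Qed.

Lemma special0_rank_bot Z' l : special0 Z' -> l < size Z'.2 ->
  nth 0 Z'.2 l \notin Z'.1 -> rank Z'.1 (nth 0 Z'.2 l) = l.+1.
Proof.
move=> [/andP [sc _] [hsz interl]] hl dc.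
apply: upward_count_eq; [exact: sdec_nonincr | exact: (@above_upward false) | |].
- move=> _ /=; rewrite hsz hl /= ltn_neqAle (interl l hl).1 andbT.
  by apply: (contraNneq _ dc) => ->; apply: mem_nth; rewrite hsz.
- by apply/implyP => l1; rewrite -leqNgt (interl l hl).2.
Qed.

Lemma consec_pair_rows Z' k l : consec_pair Z' k l ->
  [/\ nth 0 Z'.1 k \in Z'.1, nth 0 Z'.1 k \notin Z'.2,
      nth 0 Z'.2 l \in Z'.2 & nth 0 Z'.2 l \notin Z'.1].
Proof.
move=> [hk [hl [_ [sc sd]]]]; have c1 := mem_nth 0 hk; have d2 := mem_nth 0 hl.
by move: sc sd; rewrite /symI c1 d2 addbT.
Qed.

Definition interl_hi (weak : bool) : option nat -> option nat -> bool :=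
  if weak then geE else gtE.

Definition interl_lo (weak : bool) : option nat -> option nat -> bool :=
  if weak then gtE else geE.

Definition interlaced (weak : bool) (L L' : symbol) : Prop :=
  (forall i, i < size L'.2 ->
     interl_hi weak (ent L.1 i) (ent L'.2 i) /\ interl_lo weak (ent L'.2 i) (ent L.1 i.+1)) /\
  (forall i, i < size L'.1 ->
     (i = 0 \/ interl_hi weak (ent L.2 i.-1) (ent L'.1 i)) /\
     interl_lo weak (ent L'.1 i) (ent L.2 i)).

Lemma Bplus_interlaced Z Z' L L' : Bplus Z Z' L L' ->
  size Z'.1 = size Z.2 \/ size Z'.1 = (size Z.2).+1 ->
  interlaced (size Z'.1 == (size Z.2).+1) L L'.
Proof.
move=> [_ [hA hB]] [] hs; last by rewrite hs eqxx; apply: hB.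
have -> : (size Z'.1 == (size Z.2).+1) = false by rewrite hs; apply/eqP; lia.
exact: hA.
Qed.

Lemma ent_some s i : i < size s -> ent s i = Some (nth 0 s i).
Proof. by rewrite /ent => ->. Qed.

Lemma interl_hi_ent weak s i y :
  interl_hi weak (ent s i) (Some y) = (i < size s) && above weak y (nth 0 s i).
Proof. by rewrite /ent; case: (i < size s); case: weak. Qed.

Lemma interl_lo_ent weak s i y :
  interl_lo weak (Some y) (ent s i) = (i < size s) ==> ~~ above weak y (nth 0 s i).
Proof. by rewrite /ent /above; case: (i < size s); case: weak => //=; rewrite -?ltnNge -?leqNgt. Qed.

Lemma interlaced_ranks weak L L' : interlaced weak L L' ->
  nonincr L.1 -> nonincr L.2 -> nonincr L'.1 -> nonincr L'.2 ->
  (forall y, y \in L'.2 -> count (above weak y) L.1 = (rank L'.2 y).+1) /\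
  (forall y, y \in L'.1 -> count (above weak y) L.2 = rank L'.1 y).
Proof.
move=> [bot top] s1 s2 s1' s2'; split=> y yL.
- have [js nj] := nth_rank s2' yL; have [hi lo] := bot _ js.
  rewrite (ent_some js) nj interl_hi_ent in hi; rewrite (ent_some js) nj interl_lo_ent in lo.
  exact: @upward_count_eq _ _ (rank L'.2 y).+1 s1 (@above_upward weak y) (fun _ => hi) lo.
- have [js nj] := nth_rank s1' yL; have [hi lo] := top _ js.
  rewrite (ent_some js) nj interl_lo_ent in lo.
  apply: upward_count_eq s2 (@above_upward weak y) _ lo => j0.
  by case: hi => [j00|]; [rewrite j00 in j0 | rewrite (ent_some js) nj interl_hi_ent].
Qed.

Lemma interlaced_mass_gap weak L L' u v : interlaced weak L L' ->
  nonincr L.1 -> nonincr L.2 -> nonincr L'.1 -> nonincr L'.2 ->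
  v < u -> same_row L' u v -> mass (above weak u) L < mass (above weak v) L.
Proof.
move=> hI s1 s2 s1' s2' vu.
have [r2 r1] := interlaced_ranks hI s1 s2 s1' s2'.
have anti1 := above_antitone weak L.1 (ltnW vu).
have anti2 := above_antitone weak L.2 (ltnW vu).
rewrite /mass => /orP [/andP [u1 v1]|/andP [u2 v2]].
- by have := rank_strict vu u1; rewrite -(r1 _ u1) -(r1 _ v1); lia.
- by have := rank_strict vu u2; rewrite -ltnS -(r2 _ u2) -(r2 _ v2); lia.
Qed.

Lemma mass_flat Z weak u v : special1 Z -> v < u ->
  count (above weak u) Z.1 = (count (above weak v) Z.2).+1 \/
  count (above weak u) Z.2 = count (above weak v) Z.1 ->
  mass (above weak u) Z = mass (above weak v) Z.
Proof.
move=> hZ vu eq_lvl.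
have /andP [lo_u hi_u] := special1_bounds hZ (@above_upward weak u).
have /andP [lo_v hi_v] := special1_bounds hZ (@above_upward weak v).
have := above_antitone weak Z.1 (ltnW vu); have := above_antitone weak Z.2 (ltnW vu).
rewrite /mass; lia.
Qed.

Section ConsecutivePair.

Variables (Z Z' : symbol) (k l : nat).
Hypotheses (hZ : special1 Z) (hZ' : special0 Z') (hpair : consec_pair Z' k l)
  (hsz : size Z'.1 = size Z.2 \/ size Z'.1 = (size Z.2).+1)
  (hB : Bplus Z Z' Z (move Z' (pairseq Z' k l))).

Local Notation c := (nth 0 Z'.1 k).
Local Notation d := (nth 0 Z'.2 l).
Local Notation weak := (size Z'.1 == (size Z.2).+1).
Local Notation P := (move Z' [:: c; d]).

Lemma pair_ranks :
  count (above weak c) Z.1 = (rank P.2 c).+1 /\ count (above weak d) Z.2 = rank P.1 d.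
Proof.
have [c1 _ d2 _] := consec_pair_rows hpair.
have [cP dP] := move_pair_swaps c1 d2.
have [/andP [sa sb] _] := hZ.
have [r2 r1] := interlaced_ranks (Bplus_interlaced hB hsz) (sdec_nonincr sa)
  (sdec_nonincr sb) (move_nonincr1 _ _) (move_nonincr2 _ _).
by split; [apply: r2 | apply: r1].
Qed.

Lemma pair_move_ranks y :
  rank P.1 y + (y < c) = rank Z'.1 y + (y < d) /\
  rank P.2 y + (y < d) = rank Z'.2 y + (y < c).
Proof.
have [c1 c2 d2 d1] := consec_pair_rows hpair.
have [/andP [sc sd] _] := hZ'.
exact: count_move_pair (sdec_uniq sc) (sdec_uniq sd) c1 c2 d2 d1.
Qed.

Lemma aligned_flat : l = k -> d < c /\ mass (above weak c) Z = mass (above weak d) Z.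
Proof.
move=> e; have [c1 c2 d2 d1] := consec_pair_rows hpair.
have [hk [hl _]] := hpair; have [_ [_ interl]] := hZ'.
have dc : d < c.
  rewrite ltn_neqAle -{2}e (interl l hl).1 andbT.
  by apply: (contraNneq _ d1) => ->.
have cd_false : (c < d) = false by rewrite ltnNge ltnW.
split=> //; apply: (mass_flat hZ dc); left.
have [rc rd] := pair_ranks.
have [_ mc] := pair_move_ranks c; have [md _] := pair_move_ranks d.
have rc' := special0_rank_top hZ' hk c2; have rd' := special0_rank_bot hZ' hl d1.
rewrite ltnn cd_false dc in mc md.
by rewrite rc rd; lia.
Qed.

Lemma shifted_flat : l.+1 = k -> c < d /\ mass (above weak d) Z = mass (above weak c) Z.
Proof.
move=> e; have [c1 c2 d2 d1] := consec_pair_rows hpair.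
have [hk [hl _]] := hpair; have [_ [_ interl]] := hZ'.
have cd : c < d.
  have hl1 : l.+1 < size Z'.1 by rewrite e.
  rewrite ltn_neqAle -{2}e (interl l hl).2 // andbT.
  by apply: (contraNneq _ c2) => ->.
have dc_false : (d < c) = false by rewrite ltnNge ltnW.
split=> //; apply: (mass_flat hZ cd); right.
have [rc rd] := pair_ranks.
have [_ mc] := pair_move_ranks c; have [md _] := pair_move_ranks d.
have rc' := special0_rank_top hZ' hk c2; have rd' := special0_rank_bot hZ' hl d1.
rewrite ltnn dc_false cd in mc md.
by rewrite rc rd; lia.
Qed.

Lemma consec_pair_no_same_row L L' : in_Sbar Z L -> interlaced weak L L' ->
  nonincr L'.1 -> nonincr L'.2 -> ~~ same_row L' c d.
Proof.
move=> [M [_ ->]] hI s1' s2'; apply/negP => row.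
have gap u v := @interlaced_mass_gap weak _ L' u v hI (move_nonincr1 Z M) (move_nonincr2 Z M) s1' s2'.
have [_ [_ [[] e _]]] := hpair.
- have [dc flat] := aligned_flat e.
  by have := gap _ _ dc row; rewrite !mass_move flat ltnn.
- have [cd flat] := shifted_flat e.
  by have := gap _ _ cd; rewrite same_row_sym => /(_ row); rewrite !mass_move flat ltnn.
Qed.

End ConsecutivePair.

Theorem lemma0809 (Z Z' : symbol) (k l : nat) (N : seq nat) :
  special1 Z -> special0 Z' ->
  (size Z'.1 = size Z.2 \/ size Z'.1 = (size Z.2).+1) ->
  (exists L L', inD Z Z' L L') ->
  consec_pair Z' k l ->
  inD Z Z' Z (move Z' (pairseq Z' k l)) ->
  (forall x, x \in N -> symI Z' x) ->
  count (fun x => x \in N) (pairseq Z' k l) = 1 ->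
  ~ (exists L, in_Sbar Z L /\ Bplus Z Z' L (move Z' N)).
Proof.
move=> hZ hZ' hsz _ hpair [hB _] _ hone [L [hL hBN]].
have [c1 c2 d2 d1] := consec_pair_rows hpair.
have := consec_pair_no_same_row hZ hZ' hpair hsz hB hL (Bplus_interlaced hBN hsz)
  (move_nonincr1 Z' N) (move_nonincr2 Z' N).
by rewrite (move_one_same_row c1 c2 d2 d1 hone).
Qed.
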